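(* Let $\kappa$ be a regular uncountable cardinal, $I$ an ideal on $\kappa$, and $L=\{\lambda+1:\lambda<\kappa \text{ a limit ordinal}\}$. If $L\in I$, then the pleasant closure $P(I)$ contains $NS_\kappa$, and hence $P(I)$ is normal.
   Context: An ideal on $\kappa$ is a family of subsets of $\kappa$ closed under subsets and finite unions, which is $<\kappa$-complete and contains all singletons. $NS_\kappa$ is the ideal of nonstationary subsets of $\kappa$. For $A\subseteq\kappa$ and $X_\alpha\subseteq\kappa$, $\bigtriangledown_{\alpha\in A}X_\alpha=\{\xi<\kappa:\exists\alpha<\xi\,(\alpha\in A\wedge \xi\in X_\alpha)\}$. An ideal is normal if $X_\alpha$ in it for all $\alpha<\kappa$ implies $\bigtriangledown_{\alpha<\kappa}X_\alpha$ is in it; it is pleasant if whenever $A$ and all $X_\alpha$ are in it, so is $\bigtriangledown_{\alpha\in A}X_\alpha$. The pleasant closure $P(I)$ is the smallest pleasant ideal containing $I$ (obtained by iterating, transfinitely, the operation of adding diagonal unions $\bigtriangledown_{\alpha\in T}X_\alpha$ with $T\in I$ and the $X_\alpha$ from the previous stage, taking unions at limits). *)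

(* The regular uncountable cardinal kappa is modelled as a type K
   carrying a strict well-order [lt] (elements of K = ordinals below kappa),
   which is an initial ordinal (a cardinal), regular and uncountable. *)

Section KappaDefs.
Context {K : Type} (lt : K -> K -> Prop).

Definition le (x y : K) : Prop := lt x y \/ x = y.

Definition strict_wellorder : Prop :=
  (forall x, ~ lt x x) /\
  (forall x y z, lt x y -> lt y z -> lt x z) /\
  (forall x y, lt x y \/ x = y \/ lt y x) /\
  well_founded lt.

End KappaDefs.

Definition injects (A B : Type) : Prop :=
  exists f : A -> B, forall x y, f x = f y -> x = y.

Section KappaDefs2.
Context {K : Type} (lt : K -> K -> Prop).

Definition initial_ordinal : Prop :=
  forall a : K, ~ injects K {x : K | lt x a}.

Definition unbounded (X : K -> Prop) : Prop :=
  forall a, exists x, X x /\ le lt a x.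

(* regular cardinal: cofinality kappa, i.e. every unbounded subset has size kappa *)
Definition regular_cardinal : Prop :=
  initial_ordinal /\ forall X, unbounded X -> injects K {x : K | X x}.

Definition uncountable : Prop := ~ injects K nat.

Definition is_succ (y x : K) : Prop :=
  lt x y /\ forall z, lt x z -> le lt y z.

(* limit ordinal: nonzero and not a successor *)
Definition is_limit (l : K) : Prop :=
  (exists z, lt z l) /\ forall z, lt z l -> exists w, lt z w /\ lt w l.

Definition closed (C : K -> Prop) : Prop :=
  forall a, is_limit a ->
    (forall z, lt z a -> exists c, C c /\ le lt z c /\ lt c a) -> C a.

Definition club (C : K -> Prop) : Prop := closed C /\ unbounded C.

Definition nonstationary (X : K -> Prop) : Prop :=
  exists C, club C /\ forall x, C x -> ~ X x.

Definition is_ideal (I : (K -> Prop) -> Prop) : Prop :=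
  (forall X Y : K -> Prop, I Y -> (forall x, X x -> Y x) -> I X) /\
  (forall X Y : K -> Prop, I X -> I Y -> I (fun x => X x \/ Y x)) /\
  (forall (a : K) (F : K -> K -> Prop),
      (forall b, lt b a -> I (F b)) -> I (fun x => exists b, lt b a /\ F b x)) /\
  (forall a : K, I (fun x => x = a)).

Definition diag_union (A : K -> Prop) (Xf : K -> K -> Prop) : K -> Prop :=
  fun xi => exists a, lt a xi /\ A a /\ Xf a xi.

Definition normal_ideal (I : (K -> Prop) -> Prop) : Prop :=
  forall Xf : K -> K -> Prop, (forall a, I (Xf a)) -> I (diag_union (fun _ => True) Xf).

Definition pleasant (I : (K -> Prop) -> Prop) : Prop :=
  forall (A : K -> Prop) (Xf : K -> K -> Prop),
    I A -> (forall a, I (Xf a)) -> I (diag_union A Xf).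

Definition pleasant_closure (I : (K -> Prop) -> Prop) : (K -> Prop) -> Prop :=
  fun X => forall J : (K -> Prop) -> Prop,
    is_ideal J -> pleasant J -> (forall Y, I Y -> J Y) -> J X.

Definition L_set : K -> Prop :=
  fun y => exists l, is_limit l /\ is_succ y l.

End KappaDefs2.

(* Let J be a pleasant ideal containing I, hence containing L.  Bounded sets
   lie in J by kappa-completeness, and since kappa is regular and uncountable,
   limit ordinals are unbounded in kappa.
   - The set S of successor ordinals lies in J: a successor xi above the first
     limit belongs to L or to the diagonal union, over lambda+1 in L, of the
     bounded sets {x | every limit below x is <= lambda}; take lambda the
     largest limit below xi.
   - If X misses a club C, every limit xi in X bounds C below it, so
     C ∩ xi ⊆ z+1 for some z < xi; hence
     X ⊆ {0} ∪ S ∪ ∇_{s ∈ S} {x | C ∩ x ⊆ s}.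
   - Normality: ∇_a X_a ⊆ S ∪ ∇_{b ∈ S} ⋃_{a < b} X_a. *)

From Stdlib Require Import Classical ClassicalEpsilon ProofIrrelevance.

Section Notions.
Context {K : Type} (lt : K -> K -> Prop).

Definition successor (xi : K) : Prop := exists z, is_succ lt xi z.

Definition trace_below (C : K -> Prop) (a x : K) : Prop :=
  forall c, C c -> lt c x -> lt c a.

Definition below_all (C : K -> Prop) (x : K) : Prop :=
  forall c, C c -> ~ lt c x.

End Notions.

Section Kappa.
Context {K : Type} {lt : K -> K -> Prop} (Hwo : strict_wellorder lt).

Lemma lt_irrefl x : ~ lt x x.
Proof. apply Hwo. Qed.

Lemma lt_trans {x y z} : lt x y -> lt y z -> lt x z.
Proof. apply Hwo. Qed.

Lemma lt_total x y : lt x y \/ x = y \/ lt y x.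
Proof. apply Hwo. Qed.

Lemma not_lt_le {x y} : ~ lt y x -> le lt x y.
Proof.
  intros H. destruct (lt_total x y) as [h|[h|h]]; [left|right|contradiction]; exact h.
Qed.

Lemma not_le_lt {x y} : ~ le lt x y -> lt y x.
Proof.
  intros H. destruct (lt_total x y) as [h|[h|h]]; [exfalso..|exact h];
    apply H; [left|right]; exact h.
Qed.

Lemma le_lt_trans {x y z} : le lt x y -> lt y z -> lt x z.
Proof. intros [h|<-] h'; [exact (lt_trans h h')|exact h']. Qed.

Lemma exists_least (P : K -> Prop) x :
  P x -> exists m, P m /\ forall u, P u -> ~ lt u m.
Proof.
  induction (proj2 (proj2 (proj2 Hwo)) x) as [x _ IH]; intros Px.
  destruct (classic (exists u, P u /\ lt u x)) as [[u [Pu Hu]]|Hn].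
  - exact (IH u Hu Pu).
  - exists x; split; [exact Px|]. intros u Pu Hu; apply Hn; eauto.
Qed.

Lemma succ_exists x y : lt x y -> exists s, is_succ lt s x.
Proof.
  intros H. destruct (exists_least (lt x) y H) as [s [Hs Hmin]].
  exists s; split; [exact Hs|]. intros z Hz; apply not_lt_le; intros h.
  exact (Hmin z Hz h).
Qed.

Lemma lt_succ_le xi z y : is_succ lt xi z -> lt y xi -> le lt y z.
Proof.
  intros [_ Hz] Hy. apply not_lt_le; intros h.
  exact (lt_irrefl _ (le_lt_trans (Hz y h) Hy)).
Qed.

Lemma zero_succ_or_limit xi :
  (forall z, ~ lt z xi) \/ successor lt xi \/ is_limit lt xi.
Proof.
  destruct (classic (is_limit lt xi)) as [Hl|Hl]; [auto|].
  destruct (classic (exists z, lt z xi)) as [[z Hz]|Hn];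
    [|left; intros z h; apply Hn; eauto].
  right; left. apply NNPP; intros Hns. apply Hl. split; [eauto|].
  intros z' Hz'. apply NNPP; intros Hw. apply Hns. exists z'.
  split; [exact Hz'|]. intros y Hy. apply not_lt_le; intros h. apply Hw; eauto.
Qed.

Lemma greatest_limit_le z l0 :
  is_limit lt l0 -> le lt l0 z ->
  exists mu, is_limit lt mu /\ le lt mu z /\
             forall l, is_limit lt l -> le lt l z -> le lt l mu.
Proof.
  intros Hl0 Hl0z.
  set (U := fun u => forall l, is_limit lt l -> le lt l z -> le lt l u).
  assert (Uz : U z) by (intros l _ h; exact h).
  destruct (exists_least U z Uz) as [mu [Umu Hmin]].
  exists mu. split; [|split; [apply not_lt_le; intros h; exact (Hmin z Uz h)|exact Umu]].
  destruct (classic (is_limit lt mu)) as [Hm|Hm]; [exact Hm|].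
  destruct (Umu l0 Hl0 Hl0z) as [Hl0mu|<-]; [|contradiction].
  split; [eauto|]. intros y Hy.
  assert (HnU : ~ U y) by (intros H; exact (Hmin y H Hy)).
  apply NNPP; intros Hn. apply HnU. intros l Hl Hlz. apply not_lt_le; intros Hyl.
  destruct (Umu l Hl Hlz) as [h|<-]; [apply Hn; eauto|contradiction].
Qed.

Section Ideal.
Context (J : (K -> Prop) -> Prop) (HJ : is_ideal lt J).

Lemma ideal_sub X Y : J Y -> (forall x, X x -> Y x) -> J X.
Proof. apply HJ. Qed.

Lemma ideal_union X Y : J X -> J Y -> J (fun x => X x \/ Y x).
Proof. apply HJ. Qed.

Lemma ideal_bounded_union a (F : K -> K -> Prop) :
  (forall b, lt b a -> J (F b)) -> J (fun x => exists b, lt b a /\ F b x).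
Proof. apply HJ. Qed.

Lemma ideal_singleton a : J (fun x => x = a).
Proof. apply HJ. Qed.

Lemma ideal_bounded (X : K -> Prop) c : (forall x, X x -> le lt x c) -> J X.
Proof.
  intros HX.
  apply (ideal_sub _ (fun x => (exists b, lt b c /\ x = b) \/ x = c)).
  - apply ideal_union; [|apply ideal_singleton].
    apply ideal_bounded_union; intros; apply ideal_singleton.
  - intros x Hx. destruct (HX x Hx) as [h|h]; [left; exists x; auto|right; exact h].
Qed.

End Ideal.

Lemma pleasant_closure_ideal (I : (K -> Prop) -> Prop) :
  is_ideal lt (pleasant_closure lt I).
Proof.
  split; [|split; [|split]].
  - intros X Y HY HXY J HJ Hp HIJ. exact (ideal_sub J HJ X Y (HY J HJ Hp HIJ) HXY).
  - intros X Y HX HY J HJ Hp HIJ.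
    exact (ideal_union J HJ X Y (HX J HJ Hp HIJ) (HY J HJ Hp HIJ)).
  - intros a F HF J HJ Hp HIJ. apply (ideal_bounded_union J HJ).
    intros b Hb; exact (HF b Hb J HJ Hp HIJ).
  - intros a J HJ _ _. exact (ideal_singleton J HJ a).
Qed.

Lemma pleasant_closure_pleasant (I : (K -> Prop) -> Prop) :
  pleasant lt (pleasant_closure lt I).
Proof.
  intros A Xf HA HX J HJ Hp HIJ.
  apply Hp; [exact (HA J HJ Hp HIJ)|intros a; exact (HX a J HJ Hp HIJ)].
Qed.

Lemma pleasant_closure_incl (I : (K -> Prop) -> Prop) X :
  I X -> pleasant_closure lt I X.
Proof. intros HX J _ _ HIJ. exact (HIJ X HX). Qed.

Context (Hreg : regular_cardinal lt) (Hunc : uncountable (K := K)).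

Lemma kappa_inhabited : inhabited K.
Proof.
  apply NNPP; intros Hn; apply Hunc. exists (fun _ => 0).
  intros x; exfalso; exact (Hn (inhabits x)).
Qed.

Lemma nat_sequence_bounded (f : nat -> K) : exists b, forall n, lt (f n) b.
Proof.
  apply NNPP; intros Hn.
  assert (Hu : unbounded lt (fun y => exists n, f n = y)).
  { intros c. apply NNPP; intros Hc. apply Hn. exists c. intros n.
    apply NNPP; intros h. apply Hc. exists (f n). split; [eauto|].
    exact (not_lt_le h). }
  destruct (proj2 Hreg _ Hu) as [g Hg].
  destruct (choice (fun (y : {x | exists n, f n = x}) n => f n = proj1_sig y))
    as [idx Hidx]; [intros [y hy]; exact hy|].
  apply Hunc. exists (fun k => idx (g k)). intros k1 k2 Heq. apply Hg.
  assert (Hp : proj1_sig (g k1) = proj1_sig (g k2)).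
  { rewrite <- (Hidx (g k1)), <- (Hidx (g k2)), Heq. reflexivity. }
  destruct (g k1), (g k2). apply subset_eq_compat. exact Hp.
Qed.

Lemma limit_above a : exists l, is_limit lt l /\ lt a l.
Proof.
  assert (Hs : forall x, exists s, is_succ lt s x).
  { intros x. destruct (nat_sequence_bounded (fun _ => x)) as [b Hb].
    exact (succ_exists x b (Hb 0)). }
  destruct (choice _ Hs) as [sf Hsf].
  set (f := fun n => Nat.iter n sf a).
  destruct (nat_sequence_bounded f) as [b Hb].
  destruct (exists_least (fun u => forall n, lt (f n) u) b Hb) as [l [Hl Hmin]].
  exists l. split; [|exact (Hl 0)].
  split; [exists a; exact (Hl 0)|]. intros y Hy.
  destruct (not_all_ex_not _ _ (fun H => Hmin y H Hy)) as [n Hn].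
  exists (f (S n)). split; [|exact (Hl (S n))].
  exact (le_lt_trans (not_lt_le Hn) (proj1 (Hsf (f n)))).
Qed.

Lemma limits_unbounded : unbounded lt (is_limit lt).
Proof.
  intros a. destruct (limit_above a) as [l [Hl Hal]].
  exists l; split; [exact Hl|left; exact Hal].
Qed.

Section PleasantIdeal.
Context (J : (K -> Prop) -> Prop) (HJ : is_ideal lt J) (Hp : pleasant lt J)
  (HL : J (L_set lt)).

Lemma trace_below_in_ideal C a : unbounded lt C -> J (trace_below lt C a).
Proof.
  intros HC. destruct (HC a) as [c [Hc Hac]].
  apply (ideal_bounded J HJ _ c). intros x Hx. apply not_lt_le; intros Hcx.
  exact (lt_irrefl a (le_lt_trans Hac (Hx c Hc Hcx))).
Qed.

Lemma below_all_in_ideal C : unbounded lt C -> J (below_all lt C).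
Proof.
  intros HC. destruct kappa_inhabited as [k].
  apply (ideal_sub J HJ _ _ (trace_below_in_ideal C k HC)).
  intros x Hx c Hc Hcx. contradiction (Hx c Hc Hcx).
Qed.

Lemma successors_in_ideal : J (successor lt).
Proof.
  apply (ideal_sub J HJ _ (fun x => (L_set lt x \/ below_all lt (is_limit lt) x) \/
           diag_union lt (L_set lt) (trace_below lt (is_limit lt)) x)).
  { apply (ideal_union J HJ);
      [apply (ideal_union J HJ); [exact HL|]|apply Hp; [exact HL|intros a]].
    - exact (below_all_in_ideal _ limits_unbounded).
    - exact (trace_below_in_ideal _ a limits_unbounded). }
  intros xi [z Hz].
  destruct (classic (is_limit lt z)) as [Hzl|Hzl]; [left; left; exists z; auto|].
  destruct (classic (below_all lt (is_limit lt) xi)) as [Hb|Hb]; [left; right; exact Hb|].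
  right.
  destruct (not_all_ex_not _ _ Hb) as [l0 Hl0].
  apply imply_to_and in Hl0. destruct Hl0 as [Hl0 Hl0xi]. apply NNPP in Hl0xi.
  destruct (greatest_limit_le z l0 Hl0 (lt_succ_le xi z l0 Hz Hl0xi))
    as [mu [Hmu [Hmuz Hmax]]].
  assert (Hmuz' : lt mu z) by (destruct Hmuz as [h|<-]; [exact h|contradiction]).
  destruct (succ_exists mu z Hmuz') as [s Hs].
  exists s. split; [exact (le_lt_trans (proj2 Hs z Hmuz') (proj1 Hz))|].
  split; [exists mu; auto|].
  intros l Hl Hlxi.
  exact (le_lt_trans (Hmax l Hl (lt_succ_le xi z l Hz Hlxi)) (proj1 Hs)).
Qed.

Lemma nonstationary_in_ideal X : nonstationary lt X -> J X.
Proof.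
  intros [C [[Hcl Hcu] HCX]].
  apply (ideal_sub J HJ _ (fun x => (below_all lt (fun _ => True) x \/ successor lt x) \/
           diag_union lt (successor lt) (trace_below lt C) x)).
  { apply (ideal_union J HJ);
      [apply (ideal_union J HJ); [|exact successors_in_ideal]
      |apply Hp; [exact successors_in_ideal|]].
    - apply below_all_in_ideal. intros a; exists a; split; [exact I|right; reflexivity].
    - intros a; exact (trace_below_in_ideal C a Hcu). }
  intros xi Hxi. destruct (zero_succ_or_limit xi) as [H0|[Hs|Hl]].
  - left; left. intros c _; apply H0.
  - left; right; exact Hs.
  - right.
    assert (Hz : exists z, lt z xi /\ ~ exists c, C c /\ le lt z c /\ lt c xi).
    { apply NNPP; intros Hn. apply (HCX xi); [|exact Hxi]. apply (Hcl xi Hl).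
      intros z Hz. apply NNPP; intros Hn2; apply Hn; eauto. }
    destruct Hz as [z [Hzxi Hz]].
    destruct (proj2 Hl z Hzxi) as [w [Hzw Hwxi]].
    destruct (succ_exists z w Hzw) as [s Hs].
    exists s. split; [exact (le_lt_trans (proj2 Hs w Hzw) Hwxi)|].
    split; [exists z; exact Hs|].
    intros c Hc Hcxi. refine (lt_trans (not_le_lt _) (proj1 Hs)).
    intros Hzc; apply Hz; eauto.
Qed.

Lemma pleasant_ideal_normal : normal_ideal lt J.
Proof.
  intros Xf HX.
  apply (ideal_sub J HJ _ (fun x => diag_union lt (successor lt)
           (fun b x => exists a, lt a b /\ Xf a x) x \/ successor lt x)).
  { apply (ideal_union J HJ); [|exact successors_in_ideal].
    apply Hp; [exact successors_in_ideal|].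
    intros b; apply (ideal_bounded_union J HJ); intros; apply HX. }
  intros xi [a [Hax [_ Hxa]]].
  destruct (succ_exists a xi Hax) as [s Hs].
  destruct (proj2 Hs xi Hax) as [h|<-].
  - left. exists s. split; [exact h|]. split; [exists a; exact Hs|].
    exists a; split; [exact (proj1 Hs)|exact Hxa].
  - right. exists a; exact Hs.
Qed.

End PleasantIdeal.

End Kappa.

Theorem theorem3p7 (K : Type) (lt : K -> K -> Prop)
  (Hwo : strict_wellorder lt) (Hreg : regular_cardinal lt)
  (Hunc : uncountable (K := K))
  (I : (K -> Prop) -> Prop) (HI : is_ideal lt I) (HL : I (L_set lt)) :
  (forall X : K -> Prop, nonstationary lt X -> pleasant_closure lt I X) /\
  normal_ideal lt (pleasant_closure lt I).
Proof.
  pose proof (pleasant_closure_ideal (lt := lt) I) as HP.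
  pose proof (pleasant_closure_pleasant (lt := lt) I) as Hpleasant.
  pose proof (pleasant_closure_incl (lt := lt) I _ HL) as HLP.
  split.
  - exact (nonstationary_in_ideal Hwo Hreg Hunc _ HP Hpleasant HLP).
  - exact (pleasant_ideal_normal Hwo Hreg Hunc _ HP Hpleasant HLP).
Qed.
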